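(* Let $q$ be a prime power, $\ell,\mu\ge1$, $\mathbf{w}\in\mathcal{W}(w,\ell,\mu)$ and let $u$ be an integer with $0\le u\le w$. Let $\mathbf{u}^*$ be any output of the following procedure $\mathrm{ucomp}_\mu(\mathbf{w},u)$: set $\mathbf{u}\leftarrow\mathbf{w}$ and repeat $w-u$ times: let $J_1=\{i:u_i>0\}$, $J_2=\{i\in J_1: w_i=\min_{j\in J_1}w_j\}$, $J_3=\{i\in J_2:u_i=\max_{j\in J_2}u_j\}$, choose any $h\in J_3$ and set $u_h\leftarrow u_h-1$; output $\mathbf{u}$. Then $\mathbf{u}^*\in\mathcal{W}(u,\ell,\mu)$ and $$\varphi'(\mathbf{u}^*,\mathbf{w})=\max_{\mathbf{u}\in\mathcal{W}(u,\ell,\mu)}\varphi'(\mathbf{u},\mathbf{w}),\qquad\text{where }\ \varphi'(\mathbf{u},\mathbf{w})\coloneqq\prod_{i=1}^{\ell}\Phi_\mu(u_i\subseteq w_i).$$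
   Context: Gaussian binomial: $\begin{bmatrix}a\\ b\end{bmatrix}_q=\prod_{i=0}^{b-1}\frac{q^{a-i}-1}{q^{b-i}-1}$. $\mathcal{W}(w,\ell,\mu)\coloneqq\{\mathbf{w}\in\{0,\dots,\mu\}^{\ell}:\sum_i w_i=w\}$. For integers $0\le a,b\le\mu$, $\Phi_\mu(a\subseteq b)\coloneqq\begin{bmatrix}b\\ a\end{bmatrix}_q/\begin{bmatrix}\mu\\ a\end{bmatrix}_q$ if $a\le b$ and $0$ if $a>b$ (the probability that a uniformly random $a$-dimensional subspace of $\mathbb{F}_q^\mu$ lies in a fixed $b$-dimensional subspace). *)

From mathcomp Require Import all_boot all_order all_algebra.
Set Implicit Arguments. Unset Strict Implicit. Unset Printing Implicit Defensive.
Import Order.TTheory GRing.Theory Num.Theory.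

Local Open Scope ring_scope.

Definition gauss_binom (q a b : nat) : rat :=
  \prod_(i < b) ((((q ^ (a - i))%N)%:R - 1) / (((q ^ (b - i))%N)%:R - 1)).

Definition Phi (q mu a b : nat) : rat :=
  if (a <= b)%N then gauss_binom q b a / gauss_binom q mu a else 0.

Definition phi' (q mu ell : nat) (u w : {ffun 'I_ell -> nat}) : rat :=
  \prod_(i < ell) Phi q mu (u i) (w i).

Definition inW (w ell mu : nat) (v : {ffun 'I_ell -> nat}) : Prop :=
  (forall i, (v i <= mu)%N) /\ (\sum_(i < ell) v i)%N = w.

Definition is_prime_power (q : nat) : Prop :=
  exists p k : nat, prime p /\ (0 < k)%N /\ q = (p ^ k)%N.

Definition inJ2 ell (w u : {ffun 'I_ell -> nat}) (i : 'I_ell) : bool :=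
  (0 < u i)%N && [forall j, (0 < u j)%N ==> (w i <= w j)%N].

Definition inJ3 ell (w u : {ffun 'I_ell -> nat}) (i : 'I_ell) : bool :=
  inJ2 w u i && [forall j, inJ2 w u j ==> (u j <= u i)%N].

Definition ucomp_step ell (w u u' : {ffun 'I_ell -> nat}) : Prop :=
  exists h : 'I_ell, inJ3 w u h /\
    u' = [ffun i => if i == h then (u i).-1 else u i].

Fixpoint ucomp_iter ell (w : {ffun 'I_ell -> nat}) (n : nat)
    (u u' : {ffun 'I_ell -> nat}) : Prop :=
  match n with
  | 0 => u' = u
  | n.+1 => exists v, ucomp_step w u v /\ ucomp_iter w n v u'
  end.

Definition ucomp_output ell (w : {ffun 'I_ell -> nat}) (wt u : nat)
    (ustar : {ffun 'I_ell -> nat}) : Prop :=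
  ucomp_iter w (wt - u) w ustar.

(* [Phi(a <= b)] is the product over [k < a] of the factors
   [(q^(b-k) - 1) / (q^(mu-k) - 1)], which lie in (0, 1], decrease in [k] and,
   as [q >= 2], are all larger for [b] than for any [b' < b].  Maximising
   [phi'(., w)] under a fixed total is thus a choice of which factors to keep,
   and ucomp drops the smallest ones first: for its output every kept factor is
   at least the least last-kept factor [c], and every dropped one is at most [c].
   Coordinatewise, [prod_(k < v_i) * c^(u*_i) <= prod_(k < u*_i) * c^(v_i)], and
   the product over [i] with [sum v = sum u*] gives the maximality. *)

From mathcomp Require Import all_boot all_order all_algebra.
From mathcomp Require Import zify lra.
Import Order.TTheory GRing.Theory Num.Theory.
Set Implicit Arguments. Unset Strict Implicit. Unset Printing Implicit Defensive.
Local Open Scope ring_scope.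

Section Ucomp.

Variables (ell : nat) (w : {ffun 'I_ell -> nat}).

(* Whenever [i] has dropped a factor and [j] still keeps one, the last kept
   factor of [j] dominates the dropped factors of [i]. *)
Definition ucomp_inv (u : {ffun 'I_ell -> nat}) : Prop :=
  forall i j, (u i < w i)%N -> (0 < u j)%N ->
    (w i < w j)%N \/ (w i = w j /\ (u j <= (u i).+1)%N).

Lemma ucomp_step_le u u' : ucomp_step w u u' -> forall i, (u' i <= u i)%N.
Proof. by move=> [h [_ ->]] i; rewrite ffunE; case: eqP => // _; apply: leq_pred. Qed.

Lemma ucomp_step_sum u u' : ucomp_step w u u' -> ((\sum_i u' i).+1 = \sum_i u i)%N.
Proof.
move=> [h [/andP[/andP[u_h_gt0 _] _] ->]].
rewrite (bigD1 h) //= [RHS](bigD1 h) //= ffunE eqxx -addSn prednK //.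
by congr (_ + _)%N; apply: eq_bigr => i /negbTE i_neq_h; rewrite ffunE i_neq_h.
Qed.

Lemma ucomp_step_inv u u' : ucomp_step w u u' -> ucomp_inv u -> ucomp_inv u'.
Proof.
move=> [h [/andP[/andP[u_h_gt0 /forallP w_h_min] /forallP u_h_max] ->]] inv i j.
rewrite !ffunE; case: (eqVneq i h) => [->|i_neq_h]; case: (eqVneq j h) => [->|j_neq_h].
- by move=> _ _; right; split => //; lia.
- move=> _ u_j_gt0; have := w_h_min j; rewrite u_j_gt0 /= => le_wh_wj.
  case: (ltngtP (w h) (w j)) => [lt_wh_wj|//|eq_wh_wj]; [by left | by lia |].
  have j_in_J2 : inJ2 w u j.
    rewrite /inJ2 u_j_gt0; apply/forallP => k; apply/implyP => u_k_gt0.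
    by have := w_h_min k; rewrite u_k_gt0 -eq_wh_wj.
  by have := u_h_max j; rewrite j_in_J2 /= => le_uj_uh; right; split => //; lia.
- move=> lt_ui_wi _; case: (inv i h lt_ui_wi u_h_gt0) => [|[eq_w le_u]]; first by left.
  by right; split => //; lia.
- exact: inv.
Qed.

Lemma ucomp_iter_spec n u u' : ucomp_iter w n u u' ->
  [/\ forall i, (u' i <= u i)%N, (\sum_i u' i + n = \sum_i u i)%N & ucomp_inv u -> ucomp_inv u'].
Proof.
elim: n u => [|n IHn] u /=; first by move=> ->; rewrite addn0.
move=> [v [step /IHn [le_u'v sum_u'v inv_u'v]]].
split.
- by move=> i; apply: leq_trans (le_u'v i) (ucomp_step_le step i).
- by rewrite -(ucomp_step_sum step) -sum_u'v addnS.
- by move=> /(ucomp_step_inv step).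
Qed.

Lemma ucomp_output_spec wt u ustar : (\sum_i w i)%N = wt -> (u <= wt)%N ->
  ucomp_output w wt u ustar ->
  [/\ forall i, (ustar i <= w i)%N, (\sum_i ustar i)%N = u & ucomp_inv ustar].
Proof.
move=> sum_w le_u_wt /ucomp_iter_spec [le_ustar_w sum_ustar inv_ustar].
split=> //; first by move: sum_ustar; rewrite sum_w; lia.
by apply: inv_ustar => i j; rewrite ltnn.
Qed.

End Ucomp.

Lemma prod_threshold_le (R : numDomainType) (f : nat -> R) (c : R) (b m n : nat) :
  0 < c -> (m <= b)%N -> (n <= b)%N ->
  (forall k, (k < m)%N -> c <= f k) ->
  (forall k, (m <= k < b)%N -> 0 <= f k <= c) ->
  (\prod_(0 <= k < n) f k) * c ^+ m <= (\prod_(0 <= k < m) f k) * c ^+ n.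
Proof.
move=> c_gt0 le_mb le_nb f_ge_c f_le_c.
have f_ge0 k : (k < b)%N -> 0 <= f k.
  case: (ltnP k m) => [/f_ge_c c_le _|le_mk lt_kb]; first exact: le_trans (ltW c_gt0) c_le.
  by move: (f_le_c k); rewrite le_mk lt_kb => /(_ isT) /andP[].
have prod_ge0 p : (p <= b)%N -> 0 <= \prod_(0 <= k < p) f k.
  move=> le_pb; rewrite big_nat_cond; apply: prodr_ge0 => k /andP[/andP[_ ?] _].
  by apply: f_ge0; lia.
have split_prod p p' : (p <= p')%N ->
    \prod_(0 <= k < p') f k = \prod_(0 <= k < p) f k * \prod_(p <= k < p') f k.
  by move=> le_pp'; rewrite (@big_cat_nat _ _ _ p).
have split_expr p p' : (p <= p')%N -> c ^+ p' = c ^+ (p' - p) * c ^+ p.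
  by move=> le_pp'; rewrite -exprD subnK.
case: (leqP n m) => [le_nm | /ltnW le_mn].
- rewrite (split_prod n m) // (split_expr n m) // mulrA ler_pM2r ?exprn_gt0 //.
  rewrite ler_wpM2l ?prod_ge0 // -prodr_const_nat big_nat_cond [leRHS]big_nat_cond.
  apply: ler_prod => k /andP[/andP[_ lt_km] _]; rewrite (ltW c_gt0).
  exact: f_ge_c.
- rewrite (split_prod m n) // (split_expr m n) // !mulrA ler_pM2r ?exprn_gt0 //.
  rewrite ler_wpM2l ?prod_ge0 //.
  rewrite -prodr_const_nat big_nat_cond [leRHS]big_nat_cond.
  apply: ler_prod => k /andP[/andP[le_mk lt_kn] _]; apply: f_le_c; lia.
Qed.

Lemma ler_pdiv_cross (R : numFieldType) (a b c d : R) :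
  0 < b -> 0 < d -> a * d <= c * b -> a / b <= c / d.
Proof. by move=> b_gt0 d_gt0; rewrite ler_pdivrMr // mulrAC ler_pdivlMr. Qed.

Section PhiFactor.

Variables (R : realFieldType) (x : R) (mu : nat).
Hypothesis x_ge2 : 2 <= x.

Definition phi_factor (b k : nat) : R := (x ^+ (b - k) - 1) / (x ^+ (mu - k) - 1).

Let x_gt1 : 1 < x. Proof. by apply: lt_le_trans x_ge2; rewrite ltr1n. Qed.

Let expr_ge1 n : 1 <= x ^+ n. Proof. by rewrite exprn_ege1 // ltW. Qed.

Let expr_gt1 n : (0 < n)%N -> 1 < x ^+ n.
Proof. by move=> n_gt0; rewrite exprn_egt1 // -lt0n. Qed.

Let expr_le m n : (m <= n)%N -> x ^+ m <= x ^+ n.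
Proof. by rewrite ler_eXn2l. Qed.

Let expr_split m n : (m <= n)%N -> x ^+ n = x ^+ m * x ^+ (n - m).
Proof. by move=> le_mn; rewrite -exprD subnKC. Qed.

Lemma phi_factor_gt0 b k : (k < b)%N -> (b <= mu)%N -> 0 < phi_factor b k.
Proof.
move=> lt_kb le_bmu; have num_gt1 : 1 < x ^+ (b - k) by apply: expr_gt1; lia.
have den_gt1 : 1 < x ^+ (mu - k) by apply: expr_gt1; lia.
by rewrite divr_gt0 // subr_gt0.
Qed.

Lemma phi_factor_le1 b k : (k < b)%N -> (b <= mu)%N -> phi_factor b k <= 1.
Proof.
move=> lt_kb le_bmu; have den_gt1 : 1 < x ^+ (mu - k) by apply: expr_gt1; lia.
by rewrite ler_pdivrMr ?mul1r ?subr_gt0 // lerD2r expr_le //; lia.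
Qed.

Lemma phi_factor_decr b k k' : (k <= k')%N -> (k' < b)%N -> (b <= mu)%N ->
  phi_factor b k' <= phi_factor b k.
Proof.
move=> le_kk' lt_k'b le_bmu; rewrite /phi_factor.
rewrite (@expr_split (b - k') (b - k)) 1?(@expr_split (mu - k') (mu - k)); try lia.
have -> : (b - k - (b - k') = k' - k)%N by lia.
have -> : (mu - k - (mu - k') = k' - k)%N by lia.
set a := x ^+ (b - k'); set c := x ^+ (mu - k'); set p := x ^+ (k' - k).
have a_gt1 : 1 < a by apply: expr_gt1; lia.
have le_ac : a <= c by apply: expr_le; lia.
have p_ge1 : 1 <= p := expr_ge1 _.
apply: ler_pdiv_cross; nra.
Qed.

Lemma phi_factor_incr b b' k : (k < b)%N -> (b <= b')%N -> (b' <= mu)%N ->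
  phi_factor b k <= phi_factor b' k.
Proof.
move=> lt_kb le_bb' le_b'mu; rewrite /phi_factor ler_pM2r ?lerD2r.
  by apply: expr_le; lia.
by rewrite invr_gt0 subr_gt0 expr_gt1 //; lia.
Qed.

(* Reduces to the largest factor for [b.-1] against the smallest one for [b];
   this comparison is where [2 <= x] is needed (it fails for [1 < x < 2]). *)
Lemma phi_factor_dom b b' k k' : (b' < b)%N -> (b <= mu)%N -> (k' < b')%N -> (k < b)%N ->
  phi_factor b' k' <= phi_factor b k.
Proof.
move=> lt_b'b le_bmu lt_k'b' lt_kb.
have le_last : phi_factor b b.-1 <= phi_factor b k by apply: phi_factor_decr; lia.
have le_first : phi_factor b' k' <= phi_factor b.-1 0.
  apply: (@le_trans _ _ (phi_factor b' 0)); first by apply: phi_factor_decr; lia.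
  apply: phi_factor_incr; lia.
apply: le_trans le_first (le_trans _ le_last).
rewrite /phi_factor !subn0 (@expr_split b.-1 mu); last by lia.
have -> : (b - b.-1 = 1)%N by lia.
set A := x ^+ b.-1; set B := x ^+ (mu - b.-1).
have A_ge1 : 1 <= A := expr_ge1 _.
have B_gex : x <= B by rewrite -{1}(expr1 x); apply: expr_le; lia.
have B_gt1 : 1 < B := lt_le_trans x_gt1 B_gex.
have AB_ge0 : 0 <= (x - 2) * (A * B).
  by rewrite mulr_ge0 ?subr_ge0 // mulr_ge0 ?(le_trans ler01) // ltW.
clearbody A B; apply: ler_pdiv_cross; nra.
Qed.

Lemma greedy_prod_max ell (w u v : {ffun 'I_ell -> nat}) :
  (forall i, (w i <= mu)%N) -> (forall i, (u i <= w i)%N) -> ucomp_inv w u ->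
  (forall i, (v i <= w i)%N) -> (\sum_i v i = \sum_i u i)%N ->
  \prod_i \prod_(0 <= k < v i) phi_factor (w i) k
    <= \prod_i \prod_(0 <= k < u i) phi_factor (w i) k.
Proof.
move=> le_w_mu le_u_w inv le_v_w sum_vu.
pose c := \big[Order.min/1]_(j | (0 < u j)%N) phi_factor (w j) (u j).-1.
have c_gt0 : 0 < c.
  apply/bigmin_gtP; split=> // j u_j_gt0; apply: phi_factor_gt0 => //.
  by have := le_u_w j; lia.
have c_le_kept i k : (k < u i)%N -> c <= phi_factor (w i) k.
  move=> lt_k_ui; have c_le_last : c <= phi_factor (w i) (u i).-1.
    by rewrite /c; apply: bigmin_le_cond; lia.
  by apply: le_trans c_le_last _; apply: phi_factor_decr => //; have := le_u_w i; lia.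
have dropped_le_c i k : (u i <= k < w i)%N -> 0 <= phi_factor (w i) k <= c.
  move=> /andP[le_ui_k lt_k_wi].
  rewrite ltW ?phi_factor_gt0 //=; apply/bigmin_geP; split.
    exact: phi_factor_le1.
  move=> j u_j_gt0; have lt_ui_wi : (u i < w i)%N by lia.
  have := le_u_w j; case: (inv i j lt_ui_wi u_j_gt0) => [lt_w|[eq_w le_u]] le_uj_wj.
    by apply: phi_factor_dom => //; lia.
  by rewrite -eq_w; apply: phi_factor_decr => //; lia.
have key : \prod_i (\prod_(0 <= k < v i) phi_factor (w i) k * c ^+ u i)
        <= \prod_i (\prod_(0 <= k < u i) phi_factor (w i) k * c ^+ v i).
  apply: ler_prod => i _; apply/andP; split.
    apply: mulr_ge0; last by rewrite exprn_ge0 // ltW.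
    rewrite big_nat_cond; apply: prodr_ge0 => k /andP[/andP[_ lt_k_vi] _].
    by rewrite ltW // phi_factor_gt0 //; have := le_v_w i; lia.
  by apply: prod_threshold_le => // k; [apply: c_le_kept | apply: dropped_le_c].
by move: key; rewrite !big_split /= !prodrXr sum_vu ler_pM2r ?exprn_gt0.
Qed.

End PhiFactor.

Lemma prime_power_gt1 q : is_prime_power q -> (1 < q)%N.
Proof.
move=> [p [k [p_prime [k_gt0 ->]]]].
by rewrite -(expn0 p) ltn_exp2l ?prime_gt1.
Qed.

Lemma gauss_binom_ge0 q a b : (0 < q)%N -> 0 <= gauss_binom q a b.
Proof.
move=> q_gt0; apply: prodr_ge0 => i _.
by apply: divr_ge0; rewrite subr_ge0 ler1n expn_gt0 q_gt0.
Qed.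

Lemma Phi_ge0 q mu a b : (0 < q)%N -> 0 <= Phi q mu a b.
Proof. by move=> q_gt0; rewrite /Phi; case: ifP => // _; rewrite divr_ge0 ?gauss_binom_ge0. Qed.

Lemma Phi_prod q mu a b : (1 < q)%N -> (a <= b)%N ->
  Phi q mu a b = \prod_(0 <= k < a) phi_factor (q%:R : rat) mu b k.
Proof.
move=> q_gt1 le_ab; rewrite /Phi le_ab /gauss_binom -prodf_div big_mkord.
apply: eq_bigr => i _; rewrite /phi_factor -!natrX.
have den_neq0 : ((q ^ (a - i))%N%:R - 1 : rat) != 0.
  by rewrite subr_eq0 pnatr_eq1 -(expn0 q) eqn_exp2l //; have := ltn_ord i; lia.
by rewrite invf_div mulrA divfK.
Qed.

Lemma phi'_eq0 q mu ell (v w : {ffun 'I_ell -> nat}) i :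
  (w i < v i)%N -> phi' q mu v w = 0.
Proof. by move=> lt_wi_vi; rewrite /phi' (bigD1 i) //= {1}/Phi leqNgt lt_wi_vi mul0r. Qed.

Lemma phi'_ge0 q mu ell (v w : {ffun 'I_ell -> nat}) : (0 < q)%N -> 0 <= phi' q mu v w.
Proof. by move=> q_gt0; apply: prodr_ge0 => i _; apply: Phi_ge0. Qed.

Lemma phi'_prod q mu ell (v w : {ffun 'I_ell -> nat}) : (1 < q)%N ->
  (forall i, (v i <= w i)%N) ->
  phi' q mu v w = \prod_i \prod_(0 <= k < v i) phi_factor (q%:R : rat) mu (w i) k.
Proof. by move=> q_gt1 le_v_w; apply: eq_bigr => i _; apply: Phi_prod. Qed.

Theorem mainTheorem8 (q ell mu wt u : nat) (w ustar : {ffun 'I_ell -> nat}) :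
  is_prime_power q -> (1 <= ell)%N -> (1 <= mu)%N ->
  inW wt mu w -> (u <= wt)%N ->
  ucomp_output w wt u ustar ->
  inW u mu ustar /\
  (forall v : {ffun 'I_ell -> nat}, inW u mu v -> phi' q mu v w <= phi' q mu ustar w).
Proof.
move=> /prime_power_gt1 q_gt1 _ _ [le_w_mu sum_w] le_u_wt out.
have [le_ustar_w sum_ustar inv_ustar] := ucomp_output_spec sum_w le_u_wt out.
split=> [|v [_ sum_v]].
  by split=> // i; apply: leq_trans (le_ustar_w i) (le_w_mu i).
have [/forallP le_v_w | /forallPn [i]] := boolP [forall i, v i <= w i]%N; last first.
  by rewrite -ltnNge => /phi'_eq0 ->; apply: phi'_ge0; lia.
rewrite !phi'_prod //; apply: greedy_prod_max => //; last by rewrite sum_v sum_ustar.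
by rewrite (ler_nat _ 2).
Qed.
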